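(* Let $h$ be a hospital and define $\mathrm{Ch}_h:2^{X_h}\to2^{X_h}$ as follows: given $X'\subseteq X_h$, sort $X'$ in non-increasing order of $f_h(x)/x_W$ (ties broken by a fixed order) as $x^{(1)},\dots,x^{(|X'|)}$; start with $Y=\emptyset$ and for $i=1,\dots,|X'|$, add $x^{(i)}$ to $Y$ if $w_h(Y)<B_h$; return $Y$. Then $\mathrm{Ch}_h$ satisfies SUB, IRC and COM.
   Context: Hospital $h$ has a finite set $X_h$ of contracts $x$ with wages $x_W$, $0<x_W\le B_h$, where $B_h>0$ is its budget, and an additive utility $f_h$ with $f_h(x)>0$, $f_h(Y)=\sum_{x\in Y}f_h(x)$. $w_h(Y)=\sum_{x\in Y}x_W$. For $\mathrm{Ch}_h$ with $\mathrm{Ch}_h(Y)\subseteq Y$: SUB means for all $Y''\subseteq Y'\subseteq X_h$, $Y''\setminus\mathrm{Ch}_h(Y'')\subseteq Y'\setminus\mathrm{Ch}_h(Y')$; IRC means for $Y'\subseteq X_h$, $Y''\subseteq X_h\setminus Y'$, if $\mathrm{Ch}_h(Y'\cup Y'')\subseteq Y'$ then $\mathrm{Ch}_h(Y')=\mathrm{Ch}_h(Y'\cup Y'')$; COM means for all $Y''\subseteq Y'\subseteq X_h$ with $w_h(Y'')\le\max\{B_h,w_h(\mathrm{Ch}_h(Y'))\}$, $f_h(\mathrm{Ch}_h(Y'))\ge f_h(Y'')$. *)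

From HB Require Import structures.
From mathcomp Require Import all_boot all_order all_algebra.
Set Implicit Arguments. Unset Strict Implicit. Unset Printing Implicit Defensive.
Import Order.TTheory GRing.Theory Num.Theory.
Local Open Scope ring_scope.

(* A hospital h: its contract set X_h is the finite type T; wages w : T -> R,
   budget B, additive utility with per-contract values f : T -> R,
   tie-breaking fixed order given by an injective rank tb : T -> nat. *)
Section Hospital.
Variables (R : realFieldType) (T : finType).

Definition setsum (g : T -> R) (Y : {set T}) : R := \sum_(x in Y) g x.

Variables (f w : T -> R) (B : R) (tb : T -> nat).

Definition prio : rel T := fun x y =>
  (f y / w y < f x / w x) || ((f x / w x == f y / w y) && (tb x <= tb y)%N).

Definition sorted_contracts (X' : {set T}) : seq T := sort prio (enum X').

Definition greedy_step (Y : {set T}) (x : T) : {set T} :=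
  if setsum w Y < B then x |: Y else Y.

Definition Ch (X' : {set T}) : {set T} :=
  foldl greedy_step set0 (sorted_contracts X').

End Hospital.

Definition SUB (T : finType) (C : {set T} -> {set T}) : Prop :=
  forall Y'' Y' : {set T}, Y'' \subset Y' -> Y'' :\: C Y'' \subset Y' :\: C Y'.

Definition IRC (T : finType) (C : {set T} -> {set T}) : Prop :=
  forall Y' Y'' : {set T}, [disjoint Y' & Y''] ->
    C (Y' :|: Y'') \subset Y' -> C Y' = C (Y' :|: Y'').

Definition COM (R : realFieldType) (T : finType) (f w : T -> R) (B : R)
  (C : {set T} -> {set T}) : Prop :=
  forall Y'' Y' : {set T}, Y'' \subset Y' ->
    setsum w Y'' <= Num.max B (setsum w (C Y')) ->
    setsum f Y'' <= setsum f (C Y').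

From HB Require Import structures.
From mathcomp Require Import all_boot all_order all_algebra.
Set Implicit Arguments. Unset Strict Implicit. Unset Printing Implicit Defensive.
Import Order.TTheory GRing.Theory Num.Theory.
Local Open Scope ring_scope.

(* Since wages are positive, the running wage total only grows along the sorted
   list, so Ch(X) is an initial segment: x is chosen iff the contracts of X
   preceding x weigh less than B. Enlarging X enlarges these predecessor sets,
   which gives SUB and IRC. For COM, if Ch(X) is not all of X it weighs at
   least B, and every chosen contract has a ratio f/w at least that of every
   rejected one; a subset Y of X no heavier than Ch(X) trades the part of
   Ch(X) outside Y for rejected contracts of no more total wage and lower
   ratio, hence of no more utility (the fractional-knapsack exchange). *)

Section SetSums.
Variables (R : realFieldType) (T : finType).

Lemma setsum_subset (g : T -> R) (A C : {set T}) :
  (forall x, 0 <= g x) -> A \subset C -> setsum g A <= setsum g C.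
Proof.
move=> g_ge0 sAC; rewrite /setsum [leRHS](big_setID A) /= (setIidPr sAC) lerDl.
exact: sumr_ge0.
Qed.

Lemma setsumID (g : T -> R) (A C : {set T}) :
  setsum g A = setsum g (A :&: C) + setsum g (A :\: C).
Proof. by rewrite /setsum (big_setID C). Qed.

Lemma setsum_exchange (f w : T -> R) (D E : {set T}) :
  (forall x, 0 <= f x) -> (forall x, 0 < w x) ->
  {in E & D, forall y z, f z * w y <= f y * w z} ->
  setsum w D <= setsum w E -> setsum f D <= setsum f E.
Proof.
move=> f_ge0 w_gt0 ratioED wDE.
have fD_wE : setsum f D * setsum w E <= setsum f E * setsum w E.
  apply: (@le_trans _ _ (setsum f E * setsum w D)); last first.
    by rewrite ler_wpM2l //; apply: sumr_ge0.
  rewrite /setsum mulr_suml mulrC mulr_suml; apply: ler_sum => z zD.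
  rewrite mulr_sumr mulrC mulr_suml; apply: ler_sum => y yE.
  exact: ratioED.
have [->|[z zD]] := set_0Vmem D; first by rewrite /setsum big_set0 sumr_ge0.
have wE_gt0 : 0 < setsum w E.
  apply: lt_le_trans wDE; rewrite /setsum (bigD1 z) //= ltr_pwDl //.
  by apply: sumr_ge0 => x _; apply: ltW.
by rewrite ler_pM2r in fD_wE.
Qed.

End SetSums.

Section GreedyFold.
Variables (R : realFieldType) (T : finType) (w : T -> R) (B : R).
Hypothesis w_ge0 : forall x, 0 <= w x.

Local Notation greedy s := (foldl (greedy_step w B) set0 s).

Lemma set_rcons (s : seq T) x : [set:: rcons s x] = x |: [set:: s].
Proof. by apply/setP => y; rewrite !inE mem_rcons inE. Qed.

Lemma greedy_rcons s x :
  greedy (rcons s x) = if setsum w (greedy s) < B then x |: greedy s else greedy s.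
Proof. by rewrite foldl_rcons. Qed.

Lemma greedy_subset s : greedy s \subset [set:: s].
Proof.
elim/last_ind: s => [|s x IHs]; first by rewrite sub0set.
rewrite greedy_rcons set_rcons; case: ifP => _; first exact: setUS.
exact: subset_trans IHs (subsetUr _ _).
Qed.

Lemma greedy_saturated s : setsum w (greedy s) < B -> greedy s = [set:: s].
Proof.
elim/last_ind: s => [|s x IHs]; first by rewrite set_nil.
by rewrite greedy_rcons set_rcons; case: ifP => [lt_gB _|-> //]; rewrite IHs.
Qed.

Lemma mem_greedy s x : uniq s ->
  (x \in greedy s) = (x \in s) && (setsum w [set:: take (index x s) s] < B).
Proof.
elim/last_ind: s => [|s y IHs]; first by rewrite inE.
rewrite rcons_uniq => /andP[ys uniq_s]; rewrite greedy_rcons mem_rcons inE.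
have [->|neq_xy] := eqVneq x y.
  have -> : take (index y (rcons s y)) (rcons s y) = s.
    by rewrite -cats1 index_cat (negbTE ys) /= eqxx addn0 take_size_cat.
  have ygs : y \notin greedy s.
    by apply: contra ys => /(subsetP (greedy_subset s)); rewrite inE.
  case: ifP => [lt_gB|ge_gB] /=; first by rewrite setU11 -(greedy_saturated lt_gB).
  rewrite (negbTE ygs); apply/esym/negbTE; rewrite -leNgt.
  apply: le_trans (setsum_subset w_ge0 (greedy_subset s)).
  by rewrite leNgt ge_gB.
have -> : (x \in if setsum w (greedy s) < B then y |: greedy s else greedy s)
          = (x \in greedy s) by case: ifP; rewrite ?in_setU1 ?(negbTE neq_xy).
rewrite /= (IHs uniq_s); case xs: (x \in s) => //=.
by rewrite -cats1 index_cat xs takel_cat // index_size.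
Qed.

End GreedyFold.

Section SortedPrefix.
Variables (T : finType) (leT : rel T).
Hypotheses (leT_refl : reflexive leT) (leT_trans : transitive leT)
  (leT_anti : antisymmetric leT).

Lemma set_take_index s x : sorted leT s -> x \in s ->
  [set:: take (index x s) s] = [set y in s | (y != x) && leT y x].
Proof.
move=> s_sorted xs; apply/setP => y; rewrite !inE.
case ys: (y \in s); last by apply/negbTE; apply: contraFN ys; apply: mem_take.
rewrite in_take //=; apply/idP/andP => [lt_yx | [neq_yx le_yx]].
  split; last exact: (sorted_ltn_index leT_trans s_sorted).
  by apply: contraTneq lt_yx => ->; rewrite ltnn.
rewrite ltnNge; apply: contra neq_yx => le_xy; apply/eqP/leT_anti.
by rewrite le_yx (sorted_leq_index leT_trans leT_refl s_sorted).
Qed.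

End SortedPrefix.

Section Priority.
Variables (R : realFieldType) (T : finType) (f w : T -> R) (tb : T -> nat).
Hypothesis tb_inj : injective tb.
Implicit Types (X Y Z : {set T}) (x y z : T).

Local Notation prio := (prio f w tb).
Local Notation ratio x := (f x / w x).

Lemma prio_refl : reflexive prio.
Proof. by move=> x; rewrite /prio eqxx leqnn orbT. Qed.

Lemma prio_total : total prio.
Proof. by move=> x y; rewrite /prio; case: ltgtP => //= _; apply: leq_total. Qed.

Lemma prio_trans : transitive prio.
Proof.
move=> y x z; rewrite /prio.
case/orP => [lt_yx | /andP[/eqP eq_xy le_xy]]; case/orP => [lt_zy | /andP[/eqP eq_yz le_yz]].
- by rewrite (lt_trans lt_zy lt_yx).
- by rewrite -eq_yz lt_yx.
- by rewrite eq_xy lt_zy.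
- by rewrite eq_xy eq_yz eqxx (leq_trans le_xy le_yz) orbT.
Qed.

Lemma prio_anti : antisymmetric prio.
Proof.
move=> x y /andP[]; rewrite /prio.
case/orP => [lt_yx | /andP[/eqP eq_xy le_xy]]; case/orP => [lt_xy | /andP[/eqP eq_yx le_yx]].
- by have := lt_trans lt_xy lt_yx; rewrite ltxx.
- by move: lt_yx; rewrite eq_yx ltxx.
- by move: lt_xy; rewrite eq_xy ltxx.
- by apply: tb_inj; apply/eqP; rewrite eqn_leq le_xy le_yx.
Qed.

Lemma prio_ratio x y : prio x y -> ratio y <= ratio x.
Proof. by rewrite /prio => /orP[/ltW // | /andP[/eqP-> _]]. Qed.

Definition preceding X x := [set y in X | (y != x) && prio y x].

Lemma preceding_subset X Y x : X \subset Y -> preceding X x \subset preceding Y x.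
Proof.
move=> sXY; apply/subsetP => y; rewrite !inE => /andP[yX ->].
by rewrite (subsetP sXY).
Qed.

Lemma preceding_trans X x y : prio x y -> preceding X x \subset preceding X y.
Proof.
move=> le_xy; apply/subsetP => z; rewrite !inE => /and3P[zX neq_zx le_zx].
rewrite zX (prio_trans le_zx le_xy) andbT /=; apply: contra neq_zx => /eqP eq_zy.
rewrite -eq_zy in le_xy; by rewrite (prio_anti (introT andP (conj le_zx le_xy))).
Qed.

Variable B : R.
Hypothesis w_gt0 : forall x, 0 < w x.

Local Notation Ch := (Ch f w B tb).

Let w_ge0 x : 0 <= w x. Proof. exact: ltW. Qed.

Lemma mem_Ch X x : (x \in Ch X) = (x \in X) && (setsum w (preceding X x) < B).
Proof.
rewrite /Ch /sorted_contracts mem_greedy ?sort_uniq ?enum_uniq // mem_sort mem_enum.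
case xX: (x \in X) => //=.
rewrite (set_take_index prio_refl prio_trans prio_anti);
  rewrite ?(sort_sorted prio_total) ?mem_sort ?mem_enum //.
by congr (setsum w _ < B); apply/setP => y; rewrite !inE mem_sort mem_enum.
Qed.

Lemma Ch_subset X : Ch X \subset X.
Proof. by apply/subsetP => x; rewrite mem_Ch => /andP[]. Qed.

Lemma Ch_saturated X : setsum w (Ch X) < B -> Ch X = X.
Proof.
rewrite /Ch => /greedy_saturated ->.
by apply/setP => x; rewrite inE mem_sort mem_enum.
Qed.

Lemma Ch_budget X x : x \in X -> x \notin Ch X -> B <= setsum w (Ch X).
Proof. by move=> xX; rewrite leNgt; apply: contra => /Ch_saturated ->. Qed.

Lemma Ch_sub_preceding X x : x \in X -> x \notin Ch X -> Ch X \subset preceding X x.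
Proof.
move=> xX rej_x; apply/subsetP => y yCh.
have yX : y \in X := subsetP (Ch_subset X) y yCh.
rewrite inE yX (contraNneq _ rej_x) => [/=|<- //].
apply: contraT => not_le_yx.
have le_xy : prio x y by move: (prio_total x y); rewrite (negbTE not_le_yx) orbF.
have lt_yB : setsum w (preceding X y) < B by move: yCh; rewrite mem_Ch => /andP[].
move: rej_x; rewrite mem_Ch xX /=.
by rewrite (le_lt_trans (setsum_subset w_ge0 (preceding_trans X le_xy)) lt_yB).
Qed.

Lemma Ch_ratio X x y : x \in X -> x \notin Ch X -> y \in Ch X ->
  f x * w y <= f y * w x.
Proof.
move=> xX rej_x yCh.
have := subsetP (Ch_sub_preceding xX rej_x) y yCh.
rewrite inE => /and3P[_ _ /prio_ratio].
by rewrite ler_pdivrMr // mulrAC ler_pdivlMr.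
Qed.

Lemma Ch_SUB : SUB Ch.
Proof.
move=> Y Z sYZ; apply/subsetP => x; rewrite !inE !mem_Ch => /andP[rej_x xY].
rewrite (subsetP sYZ) //= andbT -leNgt; move: rej_x; rewrite xY /= -leNgt.
by move/le_trans; apply; apply/setsum_subset/preceding_subset.
Qed.

Lemma Ch_restrict X Z : X \subset Z -> Ch Z \subset X -> Ch X = Ch Z.
Proof.
move=> sXZ sChX; apply/setP => x; apply/idP/idP => [xChX | xChZ]; last first.
  rewrite mem_Ch (subsetP sChX) //=; move: xChZ; rewrite mem_Ch => /andP[_].
  exact/le_lt_trans/setsum_subset/preceding_subset.
have xX := subsetP (Ch_subset X) x xChX.
apply: contraT => rej_x; have xZ := subsetP sXZ x xX.
have sChZ : Ch Z \subset preceding X x.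
  apply/subsetP => y yChZ; move: (subsetP (Ch_sub_preceding xZ rej_x) y yChZ).
  by rewrite !inE (subsetP sChX y yChZ) => /andP[_ ->].
move: xChX; rewrite mem_Ch xX /= ltNge.
by rewrite (le_trans (Ch_budget xZ rej_x) (setsum_subset w_ge0 sChZ)).
Qed.

Lemma Ch_COM : (forall x, 0 <= f x) -> COM f w B Ch.
Proof.
move=> f_ge0 Y Z sYZ; set C := Ch Z.
(* Besides splitting cases, [ltP] rewrites [Num.max B (setsum w C)] in each branch. *)
have [/Ch_saturated eq_CZ _ | _] := ltP (setsum w C) B.
  by rewrite /C eq_CZ; apply: setsum_subset.
move=> wY_le; rewrite (setsumID f Y C) (setsumID f C Y) setIC lerD2l.
apply: setsum_exchange => // [y z | ]; rewrite ?inE.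
  by case/andP => _ yC /andP[rej_z zY]; apply: Ch_ratio (subsetP sYZ z zY) rej_z yC.
by move: wY_le; rewrite (setsumID w Y C) (setsumID w C Y) setIC lerD2l.
Qed.

End Priority.

Theorem lemma3 (R : realFieldType) (T : finType) (f w : T -> R) (B : R)
  (tb : T -> nat) :
  0 < B ->
  (forall x, 0 < w x) -> (forall x, w x <= B) ->
  (forall x, 0 < f x) ->
  injective tb ->
  let C := Ch f w B tb in
  [/\ (forall Y : {set T}, C Y \subset Y), SUB C, IRC C & COM f w B C].
Proof.
move=> _ w_gt0 _ f_gt0 tb_inj C; split.
- exact: Ch_subset.
- exact: Ch_SUB.
- by move=> Y Z _; apply: Ch_restrict => //; apply: subsetUl.
- by apply: Ch_COM => // x; apply: ltW.
Qed.
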